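(* Let $k\ge1$, $\alpha\in\mathrm{REWB}_k$, and let $N=(Q,\Sigma\uplus B_k\uplus[k],\delta,q_0,F)$ be a nondeterministic finite automaton with $L(N)=\mathcal{R}_k(\alpha)$ in which every state can reach some final state (for every $q\in Q$ there are $w$ and $q_f\in F$ with $q\overset{w}{\Rightarrow}q_f$). Then for every $q\in Q$ and every $w\in(\Sigma\uplus B_k\uplus[k])^\ast$, if $q_0\overset{w}{\Rightarrow}q$ in $N$ then $w$ is matching.
   Context: Fix a finite alphabet $\Sigma$. For $k\ge1$, $[k]=\{1,\dots,k\}$, $B_k=\{[_i,\,]_i:i\in[k]\}$ (fresh brackets, pairwise disjoint from $\Sigma$ and $[k]$). $q\overset{w}{\Rightarrow}q'$ means $q'$ is reachable from $q$ by reading $w$. Rewbs: $\mathrm{REWB}_k$ and $\mathrm{var}(\alpha)\subseteq[k]$ defined inductively: $a\in\Sigma\cup\{\varepsilon\}$ ($\mathrm{var}=\emptyset$); $\backslash i$, $i\in[k]$ ($\mathrm{var}=\{i\}$); $\alpha_0\alpha_1$, $\alpha_0+\alpha_1$ (union of vars); $\alpha_0^\ast$; $(_j\alpha_0)_j$ for $j\notin\mathrm{var}(\alpha_0)$ (var gains $j$). $\mathcal{R}_k(\alpha)$ is the regular language over $\Sigma\uplus B_k\uplus[k]$ obtained by reading $\alpha$ as a regular expression with $\backslash i$ as letter $i$ and $(_i\alpha_0)_i$ as $[_i\,\mathcal{R}_k(\alpha_0)\,]_i$. Matching: write $v=v_0n_1v_1\cdots n_mv_m$ uniquely with $v_r\in(\Sigma\uplus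 B_k)^\ast$, $n_r\in[k]$, and $y_r=v_0n_1\cdots n_rv_r$. $v$ is matching if for every $r\in\{1,\dots,m\}$ and all $x_1,x_2$ with $y_{r-1}=x_1[_{n_r}x_2$ there exist $x_2',x_3$ with $x_2=x_2'\,]_{n_r}x_3$ and $x_2'$ containing neither $[_{n_r}$ nor $]_{n_r}$. *)

From mathcomp Require Import all_boot.
From Stdlib Require Import List.

Set Implicit Arguments.
Unset Strict Implicit.
Unset Printing Implicit Defensive.

(* Letters of Sigma ⊎ B_k ⊎ [k]; the index i ∈ [k] = {1..k} is represented by
   an ordinal of 'I_k (i.e. i-1). *)
Inductive letter (S : Type) (k : nat) : Type :=
| Sym of S
| Open of 'I_k
| Close of 'I_k
| Ref of 'I_k.

Arguments Sym {S k} _.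
Arguments Open {S k} _.
Arguments Close {S k} _.
Arguments Ref {S k} _.

Definition word (S : Type) (k : nat) := list (letter S k).

Inductive rewb (S : Type) (k : nat) : Type :=
| REps
| RSym of S
| RRef of 'I_k
| RCat of rewb S k & rewb S k
| RAlt of rewb S k & rewb S k
| RStar of rewb S k
| RCap of 'I_k & rewb S k.

Arguments REps {S k}.

Fixpoint in_var (S : Type) (k : nat) (i : 'I_k) (a : rewb S k) : Prop :=
  match a with
  | REps => False
  | RSym _ => False
  | RRef j => j = i
  | RCat a0 a1 => in_var i a0 \/ in_var i a1
  | RAlt a0 a1 => in_var i a0 \/ in_var i a1
  | RStar a0 => in_var i a0
  | RCap j a0 => j = i \/ in_var i a0
  end.

Fixpoint is_rewb (S : Type) (k : nat) (a : rewb S k) : Prop :=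
  match a with
  | REps => True
  | RSym _ => True
  | RRef _ => True
  | RCat a0 a1 => is_rewb a0 /\ is_rewb a1
  | RAlt a0 a1 => is_rewb a0 /\ is_rewb a1
  | RStar a0 => is_rewb a0
  | RCap j a0 => ~ in_var j a0 /\ is_rewb a0
  end.

Inductive star_lang (A : Type) (L : list A -> Prop) : list A -> Prop :=
| star_nil : star_lang L nil
| star_app : forall u v, L u -> star_lang L v -> star_lang L (u ++ v).

Fixpoint Rk (S : Type) (k : nat) (a : rewb S k) : word S k -> Prop :=
  match a with
  | REps => fun w => w = nil
  | RSym s => fun w => w = Sym s :: nil
  | RRef i => fun w => w = Ref i :: nil
  | RCat a0 a1 => fun w => exists u v, w = u ++ v /\ Rk a0 u /\ Rk a1 v
  | RAlt a0 a1 => fun w => Rk a0 w \/ Rk a1 w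
  | RStar a0 => star_lang (Rk a0)
  | RCap j a0 => fun w => exists u, w = Open j :: u ++ Close j :: nil /\ Rk a0 u
  end.

Record nfa (S : Type) (k : nat) := NFA {
  state : finType;
  delta : state -> letter S k -> state -> Prop;
  q0 : state;
  final : state -> Prop
}.

Fixpoint reads (S : Type) (k : nat) (N : nfa S k) (q : state N) (w : word S k)
  (q' : state N) : Prop :=
  match w with
  | nil => q = q'
  | a :: w' => exists q'', delta q a q'' /\ reads q'' w' q'
  end.

Definition nfa_lang (S : Type) (k : nat) (N : nfa S k) (w : word S k) : Prop :=
  exists qf, final qf /\ reads (q0 N) w qf.

Definition matching (S : Type) (k : nat) (v : word S k) : Prop :=
  forall (y z : word S k) (n : 'I_k),
    v = y ++ Ref n :: z ->
    forall x1 x2 : word S k, y = x1 ++ Open n :: x2 ->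
      exists x2' x3 : word S k,
        x2 = x2' ++ Close n :: x3 /\
        ~ In (Open n) x2' /\ ~ In (Close n) x2'.

(* For a fixed index n, scan a word with the two-state automaton that records
   whether capture n is open: [_n opens it, ]_n closes it, and the scan fails
   on [_n while open, on ]_n while closed, and on the reference n while open.
   Since j is not a variable of alpha0 in (_j alpha0)_j, every word of
   R_k(alpha) scans from "closed" to "closed" without failing.  A word read by
   a trim automaton for R_k(alpha) is a prefix of such a word, and a
   successful scan forces every [_n before a reference n to be closed by a ]_n
   before it, which is exactly matching. *)

From mathcomp Require Import all_boot.
From Stdlib Require Import List.

Set Implicit Arguments.
Unset Strict Implicit.
Unset Printing Implicit Defensive.

Section CaptureScan.
Variables (S : Type) (k : nat) (n : 'I_k).

(* The boolean state is [true] iff capture [n] is open. *)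
Definition cap_step (b : bool) (x : letter S k) : option bool :=
  match x with
  | Open i => if i == n then (if b then None else Some true) else Some b
  | Close i => if i == n then (if b then Some false else None) else Some b
  | Ref i => if (i == n) && b then None else Some b
  | Sym _ => Some b
  end.

Fixpoint cap_run (b : bool) (w : word S k) : option bool :=
  if w is x :: t then obind (cap_run^~ t) (cap_step b x) else Some b.

Lemma cap_run_cat b (u v : word S k) :
  cap_run b (u ++ v) = obind (cap_run^~ v) (cap_run b u).
Proof. by elim: u b => [|x u IH] b //=; case: (cap_step b x). Qed.

Lemma cap_run_free (a : rewb S k) : ~ in_var n a ->
  forall w b, Rk a w -> cap_run b w = Some b.
Proof.
elim: a => [|s|j|a0 IH0 a1 IH1|a0 IH0 a1 IH1|a0 IH0|j a0 IH0] /= Hn w b.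
- by move=> ->.
- by move=> ->.
- by move=> -> /=; rewrite ifF //; apply/andP => -[/eqP].
- move=> [u [v [-> [Hu Hv]]]].
  by rewrite cap_run_cat (IH0 _ u b Hu) /=; [apply: IH1 | ]; tauto.
- by case=> H; [apply: IH0 | apply: IH1] => //; tauto.
- by elim=> [|u v Hu _ IHv] //; rewrite cap_run_cat (IH0 Hn u b Hu).
- have [Njn Na0] : j != n /\ ~ in_var n a0 by split; [apply/eqP|]; tauto.
  move=> [u [-> Hu]] /=.
  by rewrite (negbTE Njn) /= cap_run_cat (IH0 Na0 u b Hu) /= (negbTE Njn).
Qed.

Lemma cap_run_Rk (a : rewb S k) : is_rewb a ->
  forall w, Rk a w -> cap_run false w = Some false.
Proof.
elim: a => [|s|j|a0 IH0 a1 IH1|a0 IH0 a1 IH1|a0 IH0|j a0 IH0] /= Ha w.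
- by move=> ->.
- by move=> ->.
- by move=> -> /=; rewrite andbF.
- move=> [u [v [-> [Hu Hv]]]].
  by rewrite cap_run_cat (IH0 _ u Hu) /=; [apply: IH1 | ]; tauto.
- by case=> H; [apply: IH0 | apply: IH1] => //; tauto.
- by elim=> [|u v Hu _ IHv] //; rewrite cap_run_cat (IH0 Ha u Hu).
- move=> [u [-> Hu]] /=; case: Ha => Nj Ha.
  have [Ejn|Njn] := eqVneq j n; first subst j.
  + by rewrite /= cap_run_cat (cap_run_free Nj true Hu) /= eqxx.
  + by rewrite /= cap_run_cat (IH0 Ha u Hu) /= (negbTE Njn).
Qed.

Lemma cap_step_open c b : cap_step true c = Some b ->
  c = Close n /\ b = false \/ [/\ b = true, c <> Open n & c <> Close n].
Proof.
case: c => [s|i|i|i] /=; first by move=> [<-]; right.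
all: have [->|Nin] := eqVneq i n; rewrite ?eqxx ?(negbTE Nin) //=.
all: try by move=> [<-]; left.
all: by move=> [<-]; right; split=> // -[/eqP]; rewrite (negbTE Nin).
Qed.

Lemma cap_run_first_close (x : word S k) : cap_run true x = Some false ->
  exists x2' x3 : word S k,
    x = x2' ++ Close n :: x3 /\ ~ In (Open n) x2' /\ ~ In (Close n) x2'.
Proof.
elim: x => [|c t IH] //=; case E: cap_step => [b|] //= Hrun.
case: (cap_step_open E) => [[-> _]|[Eb No Nc]].
  by exists [::], t; split=> //; split=> -[].
move: Hrun; rewrite Eb => /IH [x2' [x3 [-> [H1 H2]]]].
by exists (c :: x2'), x3; split=> //; split=> /= -[]; auto.
Qed.

End CaptureScan.

Lemma matching_of_cap_runs (S : Type) (k : nat) (v : word S k) :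
  (forall n : 'I_k, isSome (cap_run n false v)) -> matching v.
Proof.
move=> Hrun y z m Ev x1 x2 Ey; move: (Hrun m); rewrite Ev Ey.
rewrite -app_assoc /= cap_run_cat.
case: (cap_run m false x1) => [[]|] //=; rewrite eqxx //= cap_run_cat.
case E: (cap_run m true x2) => [[]|] //=; rewrite eqxx //= => _.
exact: cap_run_first_close.
Qed.

Lemma matching_prefix (S : Type) (k : nat) (u v : word S k) :
  matching (u ++ v) -> matching u.
Proof. by move=> Hm y z n Hu; apply: Hm; rewrite Hu -app_assoc. Qed.

Lemma reads_cat (S : Type) (k : nat) (N : nfa S k) (u v : word S k)
  (q m q' : state N) :
  reads q u m -> reads m v q' -> reads q (u ++ v) q'.
Proof.
elim: u q => [|x u IH] q /=; first by move=> ->.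
by move=> [q'' [Hd Hr]] Hv; exists q''; split=> //; apply: IH Hr Hv.
Qed.

Theorem mainTheorem5 (S : finType) (k : nat) (hk : 1 <= k)
  (alpha : rewb S k) (halpha : is_rewb alpha)
  (N : nfa S k)
  (hL : forall w : word S k, nfa_lang N w <-> Rk alpha w)
  (htrim : forall q : state N, exists (w : word S k) (qf : state N),
             final qf /\ reads q w qf) :
  forall (q : state N) (w : word S k), reads (q0 N) w q -> matching w.
Proof.
move=> q w Hw; have [w' [qf [Hf Hw']]] := htrim q.
have HR : Rk alpha (w ++ w').
  by apply/hL; exists qf; split=> //; apply: reads_cat Hw Hw'.
apply: (@matching_prefix _ _ _ w'); apply: matching_of_cap_runs => n.
by rewrite (cap_run_Rk n halpha HR).
Qed.
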